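(* Every star gallery is normal.
   Context: An art gallery $\Gamma$ is a simple polygon in the plane (closed region: boundary together with interior), whose boundary (the walls) consists of finitely many line segments. A guard is a point of $\Gamma$; a guard $G$ visually covers $A\in\Gamma$ if the segment $GA$ lies entirely in $\Gamma$. A configuration of guards is a set $F$ of points of $\Gamma$; it visually covers $X\subseteq\Gamma$ if each point of $X$ is visually covered by some guard in $F$. $\Gamma$ is normal if every configuration of guards visually covering the walls visually covers all of $\Gamma$. $\Gamma$ is a star gallery if there is a point $P\in\Gamma$ such that for every $X\in\Gamma$ the segment $PX$ lies in $\Gamma$. *)

From Stdlib Require Import Reals Lra Lia List Arith.
Import ListNotations.
Open Scope R_scope.

Definition point : Type := (R * R)%type.

Definition lerp (a b : point) (t : R) : point :=
  ((1 - t) * fst a + t * fst b, (1 - t) * snd a + t * snd b).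

Definition on_seg (a b p : point) : Prop :=
  exists t, 0 <= t <= 1 /\ p = lerp a b t.

(** A polygon is given by its list of vertices v_0, ..., v_{n-1};
    its walls are the segments [v_i, v_{(i+1) mod n}]. *)
Definition vtx (vs : list point) (i : nat) : point := nth i vs (0, 0).
Definition nxt (vs : list point) (i : nat) : nat := Nat.modulo (S i) (length vs).

Definition on_edge (vs : list point) (i : nat) (p : point) : Prop :=
  on_seg (vtx vs i) (vtx vs (nxt vs i)) p.

Definition simple_polygon (vs : list point) : Prop :=
  (3 <= length vs)%nat /\
  (forall i, (i < length vs)%nat -> vtx vs i <> vtx vs (nxt vs i)) /\
  (forall i j, (i < length vs)%nat -> (j < length vs)%nat -> i <> j ->
     j = nxt vs i ->
     forall p, on_edge vs i p -> on_edge vs j p -> p = vtx vs j) /\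
  (forall i j, (i < length vs)%nat -> (j < length vs)%nat -> i <> j ->
     j <> nxt vs i -> i <> nxt vs j ->
     forall p, on_edge vs i p -> on_edge vs j p -> False).

Definition on_boundary (vs : list point) (p : point) : Prop :=
  exists i, (i < length vs)%nat /\ on_edge vs i p.

Fixpoint path_avoids (vs : list point) (x : point) (ps : list point) : Prop :=
  match ps with
  | [] => True
  | y :: ps' =>
      (forall p, on_seg x y p -> ~ on_boundary vs p) /\ path_avoids vs y ps'
  end.

Definition norm2 (p : point) : R := fst p * fst p + snd p * snd p.

(** x is in the unbounded component of the complement of the boundary:
    from x one can reach arbitrarily far points without crossing the walls. *)
Definition exterior (vs : list point) (x : point) : Prop :=
  ~ on_boundary vs x /\
  forall M : R, exists ps : list point,
    path_avoids vs x ps /\ M < norm2 (last ps x).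

(** The gallery: closed region = boundary together with interior,
    i.e. the complement of the exterior. *)
Definition gallery (vs : list point) (x : point) : Prop := ~ exterior vs x.

Definition seg_in (vs : list point) (a b : point) : Prop :=
  forall p, on_seg a b p -> gallery vs p.

Definition covers (vs : list point) (g a : point) : Prop := seg_in vs g a.

Definition config_covers (vs : list point) (F X : point -> Prop) : Prop :=
  forall a, X a -> exists g, F g /\ covers vs g a.

Definition normal_gallery (vs : list point) : Prop :=
  forall F : point -> Prop,
    (forall g, F g -> gallery vs g) ->
    config_covers vs F (on_boundary vs) ->
    config_covers vs F (gallery vs).

Definition star_gallery (vs : list point) : Prop :=
  exists P, gallery vs P /\ forall X, gallery vs X -> seg_in vs P X.

(* Let P be a star centre and X a point of the gallery.  Follow the ray from P
   through X: if it never met a wall beyond X, X could escape to infinity along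
   it, so X would be exterior.  Hence X lies on a segment [P, B] with B on a
   wall.  A guard G covering B sees X too: every point of [G, X] lies on a
   segment [P, Y] with Y on [G, B], and such segments lie in the gallery since
   Y does and P is a star centre. *)

From Stdlib Require Import Reals Lra Lia Psatz List Classical.
Import ListNotations.
Open Scope R_scope.
Set Implicit Arguments.

Lemma lerp_0 (a b : point) : lerp a b 0 = a.
Proof. destruct a, b; unfold lerp; simpl; f_equal; ring. Qed.

Lemma lerp_1 (a b : point) : lerp a b 1 = b.
Proof. destruct a, b; unfold lerp; simpl; f_equal; ring. Qed.

Lemma on_seg_left (a b : point) : on_seg a b a.
Proof. exists 0; split; [lra | now rewrite lerp_0]. Qed.

Lemma on_seg_right (a b : point) : on_seg a b b.
Proof. exists 1; split; [lra | now rewrite lerp_1]. Qed.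

(* The triangle P G B is the union of the segments from P to its side [G, B]. *)
Lemma on_seg_triangle (P G B X p : point) :
  on_seg P B X -> on_seg G X p -> exists Y, on_seg G B Y /\ on_seg P Y p.
Proof.
  intros [s [Hs ->]] [u [Hu ->]].
  destruct P as [p1 p2], G as [g1 g2], B as [b1 b2].
  set (w := (1 - u) + u * s).
  destruct (Req_dec w 0) as [Hw | Hw].
  - assert (Hu1 : u = 1) by (unfold w in Hw; nra).
    assert (Hs0 : s = 0) by (subst u; unfold w in Hw; nra).
    subst u s. exists (g1, g2). split; [apply on_seg_left |].
    rewrite lerp_0, lerp_1. apply on_seg_left.
  - assert (Hw0 : 0 < w) by (unfold w in *; nra).
    exists (lerp (g1, g2) (b1, b2) (u * s / w)). split.
    + exists (u * s / w). split; [| reflexivity]. split.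
      * apply Rmult_le_pos; [nra | left; apply Rinv_0_lt_compat; lra].
      * apply (Rmult_le_reg_r w); [lra |].
        unfold Rdiv; rewrite Rmult_assoc, Rinv_l by lra; unfold w; nra.
    + exists w. split; [unfold w; nra |].
      unfold lerp; simpl; unfold w in *; f_equal; field; lra.
Qed.

Lemma seg_in_star_triangle (vs : list point) (P G B X : point) :
  (forall Y, gallery vs Y -> seg_in vs P Y) ->
  seg_in vs G B -> on_seg P B X -> seg_in vs G X.
Proof.
  intros Hstar HGB HX p Hp.
  destruct (on_seg_triangle HX Hp) as [Y [HY Hpy]].
  exact (Hstar Y (HGB Y HY) p Hpy).
Qed.

Lemma on_seg_ray (P X : point) (t : R) (p : point) :
  1 <= t -> on_seg X (lerp P X t) p -> exists r, 1 <= r /\ p = lerp P X r.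
Proof.
  intros Ht [u [Hu ->]]. exists (1 + u * (t - 1)). split; [nra |].
  destruct P, X; unfold lerp; simpl; f_equal; ring.
Qed.

Lemma norm2_lerp_unbounded (P X : point) (M : R) :
  X <> P -> exists t, 1 <= t /\ M < norm2 (lerp P X t).
Proof.
  intros HXP. destruct P as [p1 p2], X as [x1 x2].
  set (d1 := x1 - p1). set (d2 := x2 - p2). set (D := d1 * d1 + d2 * d2).
  assert (HD : 0 < D).
  { unfold D. destruct (Req_dec d1 0), (Req_dec d2 0); try nra.
    exfalso; apply HXP; unfold d1, d2 in *; f_equal; lra. }
  set (N := norm2 (p1, p2)).
  assert (HN : 0 <= N) by (unfold N, norm2; simpl; nra).
  pose proof (Rle_abs M); pose proof (Rabs_pos M).
  set (t := 1 + 2 * (Rabs M + N) / D).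
  assert (HtD : t * D = D + 2 * (Rabs M + N)) by (unfold t; field; lra).
  assert (Ht : 1 <= t).
  { unfold t. assert (0 <= 2 * (Rabs M + N) / D); [| lra].
    apply Rmult_le_pos; [lra | left; apply Rinv_0_lt_compat; lra]. }
  exists t. split; [exact Ht |].
  (* coordinatewise, |P + t (X - P)|^2 >= t^2 |X - P|^2 / 2 - |P|^2 *)
  assert (Hsq : forall a b, 2 * ((a + b) * (a + b)) + 2 * (a * a) >= b * b)
    by (intros a b; pose proof (Rle_0_sqr (2 * a + b)); unfold Rsqr in *; nra).
  unfold norm2, lerp; simpl.
  replace ((1 - t) * p1 + t * x1) with (p1 + t * d1) by (unfold d1; ring).
  replace ((1 - t) * p2 + t * x2) with (p2 + t * d2) by (unfold d2; ring).
  pose proof (Hsq p1 (t * d1)). pose proof (Hsq p2 (t * d2)).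
  assert (Htt : t * t * D >= t * D) by nra.
  unfold N, norm2, D in *; simpl in *. nra.
Qed.

Lemma exterior_of_ray_avoids (vs : list point) (P X : point) :
  X <> P -> (forall t, 1 <= t -> ~ on_boundary vs (lerp P X t)) -> exterior vs X.
Proof.
  intros HXP Hray. split.
  - rewrite <- (lerp_1 P X). apply Hray; lra.
  - intros M. destruct (norm2_lerp_unbounded M HXP) as [t [Ht HM]].
    exists [lerp P X t]. split; [| exact HM].
    split; [| exact I].
    intros p Hp. destruct (on_seg_ray Ht Hp) as [r [Hr ->]]. now apply Hray.
Qed.

Lemma ray_hits_boundary (vs : list point) (P X : point) :
  gallery vs X -> X <> P -> exists B, on_boundary vs B /\ on_seg P B X.
Proof.
  intros HX HXP.
  destruct (classic (exists t, 1 <= t /\ on_boundary vs (lerp P X t)))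
    as [[t [Ht HB]] | Hn].
  - exists (lerp P X t). split; [exact HB |].
    exists (/ t). split.
    + split; [left; apply Rinv_0_lt_compat; lra |].
      rewrite <- Rinv_1. apply Rinv_le_contravar; lra.
    + destruct P, X; unfold lerp; simpl; f_equal; field; lra.
  - exfalso. apply HX, (exterior_of_ray_avoids HXP).
    intros t Ht HB. apply Hn. now exists t.
Qed.

Lemma vertex_on_boundary (vs : list point) :
  simple_polygon vs -> on_boundary vs (vtx vs 0).
Proof.
  intros [H3 _]. exists 0%nat. split; [lia | apply on_seg_left].
Qed.

Lemma star_point_on_wall_segment (vs : list point) (P X : point) :
  simple_polygon vs -> gallery vs X ->
  exists B, on_boundary vs B /\ on_seg P B X.
Proof.
  intros Hs HX. destruct (classic (X = P)) as [-> | HXP].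
  - exists (vtx vs 0). split; [exact (vertex_on_boundary Hs) | apply on_seg_left].
  - exact (ray_hits_boundary HX HXP).
Qed.

Theorem theorem2 (vs : list point) :
  simple_polygon vs -> star_gallery vs -> normal_gallery vs.
Proof.
  intros Hs [P [_ Hstar]] F _ Hcov X HX.
  destruct (star_point_on_wall_segment P Hs HX) as [B [HB HPB]].
  destruct (Hcov B HB) as [G [HFG HGB]].
  exists G. split; [exact HFG |].
  exact (seg_in_star_triangle Hstar HGB HPB).
Qed.
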